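(* Let $n$ be an even positive integer. The associated core group $\Pi^{(2)}_{L}$ of an unoriented welded link $L$ is preserved by unoriented $V^{n}$-moves.
   Context: An unoriented virtual link diagram is the image of an immersion of finitely many circles in the plane with transverse double points, each a classical crossing (with over/under information) or a virtual crossing. Welded Reidemeister moves are R1–R3, the virtual moves VR1–VR4, and the OC move (a strand passing over two strands at classical crossings may slide across a virtual crossing of those two strands); an unoriented welded link is an equivalence class of unoriented diagrams under these moves. The associated core group $\Pi^{(2)}_D$ of an unoriented virtual link diagram $D$ has one generator for each arc of $D$ (arcs run from under-crossing to under-crossing, passing through virtual crossings, which contribute no generators or relations) and one relation $yx^{-1}yz^{-1}$ for each classical crossing, where $x,z$ are the two under-arcs and $y$ is the over-arc at that crossing. It is invariant under welded Reidemeister moves, and $\Pi^{(2)}_L:=\Pi^{(2)}_D$ for a diagram $D$ of $L$. The unoriented $V^{n}$-move: inside a disk the diagram consists of two arcs $a,b$ running side by side; on one side of the move they are parallel without crossings; on the other side (same endpoints) the tangle is the $2$-braid word $(\sigma\tau)^{n}$, where $\sigma$ is a classical crossing with $b$ over $a$ and $\tau$ a virtual crossing; orientations are disregarded. The move replaces one side by the other. *)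

(* Combinatorial encoding of unoriented virtual
   link diagrams by signless over/under Gauss codes. *)
From mathcomp Require Import all_boot.
Set Implicit Arguments. Unset Strict Implicit. Unset Printing Implicit Defensive.

(* An event on a component: (crossing label, true = over / false = under). *)
Definition event := (nat * bool)%type.
(* A diagram: list of components, each a cyclic sequence of events read along
   the component (in an arbitrary direction; orientation is disregarded). *)
Definition gcode := seq (seq event).

Definition wf_gcode (D : gcode) : Prop :=
  forall c : nat, count_mem (c, true) (flatten D) <= 1 /\
                  count_mem (c, true) (flatten D) = count_mem (c, false) (flatten D).

(* generators: inl c = the arc starting at the under-passage of crossing c;
               inr i = the whole component i, when it has no under-passage. *)
Definition gen := (nat + nat)%type.
Definition letter := (gen * bool)%type.   (* true = inverse letter *)
Definition word := seq letter.

Inductive wequiv (R : word -> Prop) : word -> word -> Prop :=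
| we_refl w : wequiv R w w
| we_sym u v : wequiv R u v -> wequiv R v u
| we_trans u v w : wequiv R u v -> wequiv R v w -> wequiv R u w
| we_cancel u v g b : wequiv R (u ++ (g, b) :: (g, ~~ b) :: v) (u ++ v)
| we_rel u v r : R r -> wequiv R (u ++ r ++ v) (u ++ v).

Definition over_gens (P : pred gen) (w : word) : bool := all (fun l => P l.1) w.

(* group isomorphism between < P1 | R1 > and < P2 | R2 > (elements = words in
   the generators modulo wequiv, product = concatenation) *)
Definition pres_iso (P1 : pred gen) (R1 : word -> Prop)
                    (P2 : pred gen) (R2 : word -> Prop) : Prop :=
  exists phi psi : word -> word,
    (forall u, over_gens P1 u -> over_gens P2 (phi u)) /\
    (forall v, over_gens P2 v -> over_gens P1 (psi v)) /\
    (forall u v, over_gens P1 u -> over_gens P1 v -> wequiv R1 u v ->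
                 wequiv R2 (phi u) (phi v)) /\
    (forall u v, over_gens P2 u -> over_gens P2 v -> wequiv R2 u v ->
                 wequiv R1 (psi u) (psi v)) /\
    (forall u v, over_gens P1 u -> over_gens P1 v ->
                 wequiv R2 (phi (u ++ v)) (phi u ++ phi v)) /\
    (forall u v, over_gens P2 u -> over_gens P2 v ->
                 wequiv R1 (psi (u ++ v)) (psi u ++ psi v)) /\
    (forall u, over_gens P1 u -> wequiv R1 (psi (phi u)) u) /\
    (forall v, over_gens P2 v -> wequiv R2 (phi (psi v)) v).

(* the arc containing the segment of component i just after position p:
   go backwards (cyclically) from p to the first under-passage *)
Definition arc_after (D : gcode) (i p : nat) : gen :=
  let s := nth [::] D i in
  let t := rev (take p.+1 s) ++ rev (drop p.+1 s) in
  match [seq e <- t | ~~ e.2] with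
  | e :: _ => inl e.1
  | [::] => inr i
  end.

Definition is_arc (D : gcode) : pred gen := fun g =>
  match g with
  | inl c => (c, false) \in flatten D
  | inr i => (i < size D) && all (fun e : event => e.2) (nth [::] D i)
  end.

Definition is_relator (D : gcode) (r : word) : Prop :=
  exists i j i' j' c,
    [/\ i < size D /\ j < size (nth [::] D i),
        nth (0, true) (nth [::] D i) j = (c, false),
        i' < size D /\ j' < size (nth [::] D i'),
        nth (0, false) (nth [::] D i') j' = (c, true) &
        let m := size (nth [::] D i) in
        let x := arc_after D i ((j + m).-1 %% m) in
        let z := arc_after D i j in
        let y := arc_after D i' j' in
        r = [:: (y, false); (x, true); (y, false); (z, true)]].

Definition ins (D : gcode) (i p : nat) (blk : seq event) : gcode :=
  let s := nth [::] D i in set_nth [::] D i (take p s ++ blk ++ drop p s).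

(* insert X at gap (i1,p1) and Y at gap (i2,p2); in the same gap, X comes before Y *)
Definition ins2 (D : gcode) (i1 p1 : nat) (X : seq event) (i2 p2 : nat) (Y : seq event) :=
  if (i1 == i2) && (p2 < p1) then ins (ins D i1 p1 X) i2 p2 Y
  else ins (ins D i2 p2 Y) i1 p1 X.

(* D' is obtained from D by inserting the tangle (sigma tau)^n: n new crossings
   c_1..c_n, strand a passes under them and strand b over them, both in the order
   c_1..c_n along the parallel strands (each possibly read backwards along its
   component). *)
Definition vn_insert (n : nat) (D D' : gcode) : Prop :=
  exists (cs : seq nat) (ra rb : bool) (i1 p1 i2 p2 : nat),
    [/\ size cs = n /\ uniq cs,
        (forall c b, c \in cs -> (c, b) \notin flatten D),
        i1 < size D /\ p1 <= size (nth [::] D i1),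
        i2 < size D /\ p2 <= size (nth [::] D i2) &
        let A0 := [seq (c, false) | c <- cs] in
        let B0 := [seq (c, true) | c <- cs] in
        let A := if ra then rev A0 else A0 in
        let B := if rb then rev B0 else B0 in
        D' = ins2 D i1 p1 A i2 p2 B \/ D' = ins2 D i2 p2 B i1 p1 A].

Definition vn_move (n : nat) (D D' : gcode) : Prop := vn_insert n D D' \/ vn_insert n D' D.

(* Inserting the tangle (sigma tau)^n cuts the under-strand a, whose arc in D is
   alpha, into arcs x_0, ..., x_n that all pass under one arc y of the over-strand b,
   whose arc in D is beta.  The relators of the new crossings say
   x_(k+1) = y x_k^-1 y, so x_k is x_0 for k even and y x_0^-1 y for k odd; since n is
   even, x_n = x_0, which is exactly the identification of the two ends of alpha.
   Hence alpha |-> x_0 and, back, x_k |-> alpha or beta alpha^-1 beta by the parity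
   of k, y |-> beta, (all other arcs fixed) are mutually inverse substitutions that
   preserve the relators. *)

From mathcomp Require Import all_boot zify.
Set Implicit Arguments. Unset Strict Implicit. Unset Printing Implicit Defensive.

Notation word1 g := [:: (g, false)].

Definition word_inv (w : word) : word := rev [seq (l.1, ~~ l.2) | l <- w].

Lemma word_inv_cat u v : word_inv (u ++ v) = word_inv v ++ word_inv u.
Proof. by rewrite /word_inv map_cat rev_cat. Qed.

Lemma word_invK : involutive word_inv.
Proof.
move=> w; rewrite /word_inv map_rev revK -map_comp.
by elim: w => [|[g b] w IH] //=; rewrite negbK IH.
Qed.

Lemma word_inv_cons l w : word_inv (l :: w) = word_inv w ++ [:: (l.1, ~~ l.2)].
Proof. by rewrite /word_inv /= rev_cons cats1. Qed.

(* y x^-1 y, the core-group operation: a crossing relator says z = core_word y x. *)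
Definition core_word (y x : word) : word := y ++ word_inv x ++ y.

Definition crossing_word (y x z : gen) : word :=
  [:: (y, false); (x, true); (y, false); (z, true)].

Lemma crossing_wordE y x z :
  crossing_word y x z = core_word (word1 y) (word1 x) ++ word_inv (word1 z).
Proof. by []. Qed.

Section WordCongruence.
Variable R : word -> Prop.

Lemma wequiv_ctx p q u v : wequiv R u v -> wequiv R (p ++ u ++ q) (p ++ v ++ q).
Proof.
elim=> {u v} [w|u v _ IH|u v w _ IH1 _ IH2|u v g b|u v r Hr].
- exact: we_refl.
- exact: we_sym.
- exact: we_trans IH2.
- by have := @we_cancel R (p ++ u) (v ++ q) g b; rewrite -!catA.
- have := @we_rel R (p ++ u) (v ++ q) r Hr; by rewrite -!catA.
Qed.

Lemma wequiv_cat u u' v v' :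
  wequiv R u u' -> wequiv R v v' -> wequiv R (u ++ v) (u' ++ v').
Proof.
move=> Hu Hv; apply: (@we_trans _ _ (u' ++ v)).
  by have := wequiv_ctx [::] v Hu.
by have := wequiv_ctx u' [::] Hv; rewrite !cats0.
Qed.

Lemma wequiv_mulV w : wequiv R (w ++ word_inv w) [::].
Proof.
elim: w => [|[g b] w IH] /=; first exact: we_refl.
rewrite word_inv_cons /=.
apply: (@we_trans _ _ ([:: (g, b)] ++ [:: (g, ~~ b)])).
  by have := wequiv_ctx [:: (g, b)] [:: (g, ~~ b)] IH; rewrite -!catA.
exact: (@we_cancel R [::] [::] g b).
Qed.

Lemma wequiv_Vmul w : wequiv R (word_inv w ++ w) [::].
Proof. by have := wequiv_mulV (word_inv w); rewrite word_invK. Qed.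

Lemma wequiv_inv u v : wequiv R u v -> wequiv R (word_inv u) (word_inv v).
Proof.
move=> H.
apply: (@we_trans _ _ (word_inv u ++ (v ++ word_inv v))).
  by have := wequiv_ctx (word_inv u) [::] (we_sym (wequiv_mulV v)); rewrite !cats0.
apply: (@we_trans _ _ ((word_inv u ++ u) ++ word_inv v)).
  by rewrite -catA; exact: wequiv_ctx (we_sym H).
exact: (wequiv_ctx [::] (word_inv v) (wequiv_Vmul u)).
Qed.

Lemma wequiv_relator r : R r -> wequiv R r [::].
Proof. by move=> Hr; have := @we_rel R [::] [::] r Hr; rewrite cats0. Qed.

Lemma wequiv_mulV_eq u v : wequiv R (u ++ word_inv v) [::] -> wequiv R u v.
Proof.
move=> H; apply: (@we_trans _ _ (u ++ word_inv v ++ v)).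
  by have := wequiv_ctx u [::] (we_sym (wequiv_Vmul v)); rewrite /= !cats0.
by rewrite catA; have := wequiv_ctx [::] v H.
Qed.

Lemma wequiv_mulV_of_eq u v : wequiv R u v -> wequiv R (u ++ word_inv v) [::].
Proof. by move=> H; apply: we_trans (wequiv_mulV v); apply: wequiv_cat H (we_refl _ _). Qed.

Lemma wequiv_core y y' x x' :
  wequiv R y y' -> wequiv R x x' -> wequiv R (core_word y x) (core_word y' x').
Proof. by move=> Hy Hx; do 2?apply: wequiv_cat => //; exact: wequiv_inv. Qed.

Lemma core_wordK y x : wequiv R (core_word y (core_word y x)) x.
Proof.
rewrite /core_word !word_inv_cat word_invK -!catA.
rewrite [y ++ _]catA -[x in wequiv R _ x]cat0s.
apply: wequiv_cat; first exact: wequiv_mulV.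
rewrite -[x in wequiv R _ x]cats0.
apply: wequiv_cat; [exact: we_refl | exact: wequiv_Vmul].
Qed.

Definition core_iter (y x : word) (m : nat) : word := if odd m then core_word y x else x.

Lemma core_iterS y x m : wequiv R (core_word y (core_iter y x m)) (core_iter y x m.+1).
Proof. by rewrite /core_iter /=; case: odd; [exact: core_wordK | exact: we_refl]. Qed.

Lemma wequiv_core_iter y y' x x' m :
  wequiv R y y' -> wequiv R x x' -> wequiv R (core_iter y x m) (core_iter y' x' m).
Proof. by rewrite /core_iter; case: odd => // *; exact: wequiv_core. Qed.

End WordCongruence.

Definition letter_subst (h : gen -> word) (l : letter) : word :=
  if l.2 then word_inv (h l.1) else h l.1.

Definition word_subst (h : gen -> word) (w : word) : word :=
  flatten [seq letter_subst h l | l <- w].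

Lemma word_subst_cat h u v : word_subst h (u ++ v) = word_subst h u ++ word_subst h v.
Proof. by rewrite /word_subst map_cat flatten_cat. Qed.

Lemma word_subst_cons h l w : word_subst h (l :: w) = letter_subst h l ++ word_subst h w.
Proof. by []. Qed.

Lemma word_subst1 h g : word_subst h (word1 g) = h g.
Proof. by rewrite /word_subst /= cats0. Qed.

Lemma word_subst_inv h w : word_subst h (word_inv w) = word_inv (word_subst h w).
Proof.
elim: w => [|[g b] w IH] //=.
rewrite word_inv_cons word_subst_cat IH word_subst_cons word_inv_cat.
by rewrite /word_subst /= cats0 /letter_subst /=; case: b; rewrite ?word_invK.
Qed.

Lemma word_subst_core h y x :
  word_subst h (core_word y x) = core_word (word_subst h y) (word_subst h x).
Proof. by rewrite /core_word !word_subst_cat word_subst_inv. Qed.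

Lemma word_subst_core_iter h y x m :
  word_subst h (core_iter y x m) = core_iter (word_subst h y) (word_subst h x) m.
Proof. by rewrite /core_iter; case: odd; rewrite ?word_subst_core. Qed.

Lemma word_subst_crossing_word h y x z :
  word_subst h (crossing_word y x z) = core_word (h y) (h x) ++ word_inv (h z).
Proof.
by rewrite crossing_wordE word_subst_cat word_subst_core word_subst_inv !word_subst1.
Qed.

Lemma wequiv_subst_crossing_word R h y x z y' x' z' :
  wequiv R (h y) (word1 y') -> wequiv R (h x) (word1 x') -> wequiv R (h z) (word1 z') ->
  wequiv R (word_subst h (crossing_word y x z)) (crossing_word y' x' z').
Proof.
move=> *; rewrite word_subst_crossing_word crossing_wordE.
by apply: wequiv_cat; [exact: wequiv_core | exact: wequiv_inv].
Qed.

Lemma wequiv_subst R1 R2 h :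
  (forall r, R1 r -> wequiv R2 (word_subst h r) [::]) ->
  forall u v, wequiv R1 u v -> wequiv R2 (word_subst h u) (word_subst h v).
Proof.
move=> hR u v; elim=> {u v} [w|u v _ IH|u v w _ IH1 _ IH2|u v g b|u v r Hr].
- exact: we_refl.
- exact: we_sym.
- exact: we_trans IH2.
- rewrite !word_subst_cat; apply: wequiv_cat; first exact: we_refl.
  have -> : (g, b) :: (g, ~~ b) :: v = [:: (g, b); (g, ~~ b)] ++ v by [].
  rewrite word_subst_cat.
  have Hgg : wequiv R2 (word_subst h [:: (g, b); (g, ~~ b)]) [::].
    rewrite /word_subst /= cats0 /letter_subst /=.
    by case: b; [exact: wequiv_Vmul | exact: wequiv_mulV].
  by have := wequiv_ctx [::] (word_subst h v) Hgg.
- rewrite !word_subst_cat; apply: wequiv_cat; first exact: we_refl.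
  by have := wequiv_ctx [::] (word_subst h v) (hR r Hr).
Qed.

Lemma over_gens_cat P u v : over_gens P (u ++ v) = over_gens P u && over_gens P v.
Proof. exact: all_cat. Qed.

Lemma over_gens_inv P w : over_gens P (word_inv w) = over_gens P w.
Proof. by rewrite /over_gens /word_inv all_rev all_map. Qed.

Lemma over_gens_subst (P1 P2 : pred gen) h :
  (forall g, P1 g -> over_gens P2 (h g)) ->
  forall u, over_gens P1 u -> over_gens P2 (word_subst h u).
Proof.
move=> hP; elim=> [|[g b] w IH] //= /andP[Hg Hw].
rewrite word_subst_cons over_gens_cat IH // andbT /letter_subst.
by case: b; rewrite ?over_gens_inv hP.
Qed.

Lemma word_subst_id R (P : pred gen) h :
  (forall g, P g -> wequiv R (h g) (word1 g)) ->
  forall u, over_gens P u -> wequiv R (word_subst h u) u.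
Proof.
move=> hg; elim=> [|[g b] w IH] /=; first by move=> _; exact: we_refl.
move=> /andP[Hg Hw]; rewrite word_subst_cons -cat1s.
apply: wequiv_cat; last exact: IH.
rewrite /letter_subst /=; case: b; last exact: hg.
exact: wequiv_inv (hg g Hg).
Qed.

Lemma word_subst_comp h h' u :
  word_subst h' (word_subst h u) = word_subst (fun g => word_subst h' (h g)) u.
Proof.
elim: u => [|l u IH] //; rewrite !word_subst_cons word_subst_cat IH.
by rewrite /letter_subst; case: l.2; rewrite ?word_subst_inv.
Qed.

Lemma pres_iso_sym (P1 : pred gen) R1 (P2 : pred gen) R2 :
  pres_iso P1 R1 P2 R2 -> pres_iso P2 R2 P1 R1.
Proof. by case=> phi [psi [? [? [? [? [? [? [? ?]]]]]]]]; exists psi, phi. Qed.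

Lemma pres_iso_subst (P1 : pred gen) R1 (P2 : pred gen) R2 h h' :
  (forall g, P1 g -> over_gens P2 (h g)) ->
  (forall g, P2 g -> over_gens P1 (h' g)) ->
  (forall r, R1 r -> wequiv R2 (word_subst h r) [::]) ->
  (forall r, R2 r -> wequiv R1 (word_subst h' r) [::]) ->
  (forall g, P1 g -> wequiv R1 (word_subst h' (h g)) (word1 g)) ->
  (forall g, P2 g -> wequiv R2 (word_subst h (h' g)) (word1 g)) ->
  pres_iso P1 R1 P2 R2.
Proof.
move=> o1 o2 r1 r2 c1 c2.
exists (word_subst h), (word_subst h').
do 2 (split; first exact: over_gens_subst).
do 2 (split; first by move=> u v _ _; apply: wequiv_subst).
do 2 (split; first by move=> u v _ _; rewrite word_subst_cat; exact: we_refl).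
split=> u Hu; rewrite word_subst_comp; apply: word_subst_id Hu.
- exact: c1.
- exact: c2.
Qed.

Notation comp D i := (nth [::] D i).
(* Out of range, [ev] returns an over-passage. *)
Notation ev s j := (nth (0, true) s j).
Notation all_over := (all (fun e : event => e.2)).

Definition first_under (t : seq event) : option nat :=
  if [seq e <- t | ~~ e.2] is e :: _ then Some e.1 else None.

Definition arc_of_under (o : option nat) (i : nat) : gen :=
  if o is Some c then inl c else inr i.

(* The arc of component [i] (with code [s]) through the gap just before position [g]:
   read [s] backwards, cyclically, from position [g - 1]. *)
Definition gap_arc (s : seq event) (i g : nat) : gen :=
  arc_of_under (first_under (rev (take g s) ++ rev (drop g s))) i.

Lemma arc_afterE D i p : arc_after D i p = gap_arc (comp D i) i p.+1.
Proof. by rewrite /arc_after /gap_arc /first_under; case: filter. Qed.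

Lemma first_under_cat u v :
  first_under (u ++ v) = if first_under u is Some c then Some c else first_under v.
Proof. by rewrite /first_under filter_cat; case: filter. Qed.

Lemma first_under_cons e u : first_under (e :: u) = if e.2 then first_under u else Some e.1.
Proof. by rewrite /first_under /=; case: e => c []. Qed.

Lemma first_under_NoneP t : first_under t = None <-> all_over t.
Proof.
elim: t => [|[c b] t IH] //; rewrite first_under_cons /=.
by case: b => //=; split.
Qed.

Lemma first_under_mem t c : first_under t = Some c -> (c, false) \in t.
Proof.
elim: t => [|[c' b] t IH] //; rewrite first_under_cons in_cons /=.
by case: b => [/IH ->|[<-]]; rewrite ?orbT ?eqxx.
Qed.

Lemma all_over_rotate s g : all_over (rev (take g s) ++ rev (drop g s)) = all_over s.
Proof. by rewrite all_cat !all_rev -all_cat cat_take_drop. Qed.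

Lemma gap_arc_step s i g : g < size s ->
  gap_arc s i g.+1 = if (ev s g).2 then gap_arc s i g else inl (ev s g).1.
Proof.
move=> Hg; rewrite /gap_arc (take_nth (0, true) Hg) (drop_nth (0, true) Hg).
rewrite rev_rcons rev_cons /= first_under_cons.
case: ifP => He //; rewrite -cats1 catA [in RHS]first_under_cat.
by case: first_under => //; rewrite first_under_cons He.
Qed.

Lemma gap_arc_size s i : gap_arc s i (size s) = gap_arc s i 0.
Proof. by rewrite /gap_arc take_size drop_size take0 drop0 /= cats0. Qed.

Lemma gap_arc_prev s i j : j < size s ->
  gap_arc s i ((j + size s).-1 %% size s).+1 = gap_arc s i j.
Proof.
case: j => [|j] Hj.
  by rewrite add0n modn_small prednK ?gap_arc_size //; lia.
by rewrite addSn /= modnDr modn_small //; lia.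
Qed.

Lemma gap_arc_all_over s i g : all_over s -> gap_arc s i g = inr i.
Proof. by rewrite -(all_over_rotate s g) -first_under_NoneP /gap_arc => ->. Qed.

Lemma gap_arc_inr s i g j : gap_arc s i g = inr j -> j = i /\ all_over s.
Proof.
rewrite /gap_arc /arc_of_under; case E: first_under => [c|] // [<-].
by split => //; rewrite -(all_over_rotate s g) -first_under_NoneP.
Qed.

Lemma gap_arc_over_run (s : seq event) i p len : p + len <= size s ->
  (forall k, k < len -> (ev s (p + k)).2) ->
  forall k, k <= len -> gap_arc s i (p + k) = gap_arc s i p.
Proof.
move=> Hs Ho; elim=> [|k IH] Hk; first by rewrite addn0.
rewrite addnS gap_arc_step; last lia.
by rewrite Ho ?IH //; lia.
Qed.

Lemma mem_flatten_nth D x : x \in flatten D ->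
  exists i j, [/\ i < size D, j < size (comp D i) & ev (comp D i) j = x].
Proof.
case/flattenP => s Hs Hx; exists (index s D), (index x s).
by rewrite index_mem Hs nth_index // index_mem Hx nth_index.
Qed.

Lemma nth_mem_flatten D i j : i < size D -> j < size (comp D i) ->
  ev (comp D i) j \in flatten D.
Proof. by move=> Hi Hj; apply/flattenP; exists (comp D i); exact: mem_nth. Qed.

Lemma is_arc_gap_arc D i g : i < size D -> is_arc D (gap_arc (comp D i) i g).
Proof.
move=> Hi; rewrite /gap_arc /arc_of_under; case E: first_under => [c|] /=.
  have := first_under_mem E; rewrite mem_cat !mem_rev => H.
  apply/flattenP; exists (comp D i); first exact: mem_nth.
  by case/orP: H => [/mem_take|/mem_drop].
by rewrite Hi -(all_over_rotate _ g) -first_under_NoneP.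
Qed.

Definition crossing_relator (D : gcode) (i j i' j' c : nat) : word :=
  crossing_word (gap_arc (comp D i') i' j'.+1) (gap_arc (comp D i) i j) (inl c).

Definition crossing_at (D : gcode) (i j i' j' c : nat) : Prop :=
  [/\ i < size D, j < size (comp D i), ev (comp D i) j = (c, false),
      i' < size D /\ j' < size (comp D i') & ev (comp D i') j' = (c, true)].

Lemma is_relatorP D r : is_relator D r <->
  exists i j i' j' c, crossing_at D i j i' j' c /\ r = crossing_relator D i j i' j' c.
Proof.
split.
  case=> i [j [i' [j' [c [[Hi Hj] Hu [Hi' Hj'] Ho Hr]]]]].
  exists i, j, i', j', c; split.
    by split => //; rewrite (set_nth_default (0, false)).
  by rewrite Hr /= !arc_afterE gap_arc_prev // (gap_arc_step i Hj) Hu.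
case=> i [j [i' [j' [c [[Hi Hj Hu [Hi' Hj'] Ho] ->]]]]].
exists i, j, i', j', c; split => //; first by rewrite (set_nth_default (0, true)).
by rewrite /= /crossing_relator !arc_afterE gap_arc_prev // (gap_arc_step i Hj) Hu.
Qed.

Definition seq_ins (s : seq event) (q : nat) (X : seq event) : seq event :=
  take q s ++ X ++ drop q s.

Lemma size_seq_ins s q X : q <= size s -> size (seq_ins s q X) = size s + size X.
Proof. by move=> Hq; rewrite /seq_ins !size_cat size_takel // size_drop; lia. Qed.

Lemma nth_seq_ins s q X J d : q <= size s ->
  nth d (seq_ins s q X) J =
  if J < q then nth d s J else if J < q + size X then nth d X (J - q)
  else nth d s (J - size X).
Proof.
move=> Hq; rewrite /seq_ins nth_cat size_takel //.
case: ifP => HJ; first by rewrite nth_take.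
rewrite nth_cat; case: ifP => HJ2; case: ifP => HJ3 //; try lia.
by rewrite nth_drop; congr nth; lia.
Qed.

Lemma seq_split3 (s : seq event) g q : g <= q -> q <= size s ->
  exists u w v, [/\ s = u ++ w ++ v, size u = g & size (u ++ w) = q].
Proof.
move=> Hgq Hq; exists (take g s), (drop g (take q s)), (drop q s); split.
- by rewrite catA -{1}(take_takel s Hgq) !cat_take_drop.
- by rewrite size_takel //; lia.
- by rewrite -{1}(take_takel s Hgq) cat_take_drop size_takel.
Qed.

Lemma seq_ins_cat u v X : seq_ins (u ++ v) (size u) X = u ++ X ++ v.
Proof. by rewrite /seq_ins take_size_cat ?drop_size_cat. Qed.

Lemma seq_ins_comm s p1 p2 X Y : p2 <= p1 -> p1 <= size s ->
  seq_ins (seq_ins s p1 X) p2 Y = seq_ins (seq_ins s p2 Y) (p1 + size Y) X.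
Proof.
move=> H21 H1; case: (seq_split3 H21 H1) => u [w [v [-> <- <-]]].
rewrite catA seq_ins_cat -catA seq_ins_cat -catA seq_ins_cat.
have -> : size (u ++ w) + size Y = size (u ++ Y ++ w) by rewrite !size_cat; lia.
by rewrite !catA seq_ins_cat -!catA.
Qed.

(* Inserting a block [X] into a gap whose arc is [a] only renames arcs by cutting [a]:
   the part of [a] after [X] becomes the arc of the last under-crossing of [X]. *)
Definition arc_renamed (X : seq event) (a new old : gen) : Prop :=
  new = old \/ exists c, first_under (rev X) = Some c /\ new = inl c /\ old = a.

Lemma arc_renamed_all_over X a new old :
  all_over X -> arc_renamed X a new old -> new = old.
Proof.
move=> HX [//|[c [Hc _]]].
by move: Hc; have /first_under_NoneP -> : all_over (rev X) by rewrite all_rev.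
Qed.

Lemma gap_arc_cat a b i :
  gap_arc (a ++ b) i (size a) = arc_of_under (first_under (rev a ++ rev b)) i.
Proof. by rewrite /gap_arc take_size_cat // drop_size_cat. Qed.

(* Read backwards from a gap, [P] is met before the inserted block and [Q] after it. *)
Lemma arc_renamed_ins P Q X i :
  arc_renamed X (arc_of_under (first_under (Q ++ P)) i)
    (arc_of_under (first_under (P ++ rev X ++ Q)) i)
    (arc_of_under (first_under (P ++ Q)) i).
Proof.
rewrite /arc_renamed !first_under_cat.
case: (first_under P) => [c|]; first by left.
case: (first_under (rev X)) => [c|]; last by left.
by right; exists c; do 2!split=> //; case: (first_under Q).
Qed.

Lemma gap_arc_ins_left s q X g i : g <= q -> q <= size s ->
  arc_renamed X (gap_arc s i q) (gap_arc (seq_ins s q X) i g) (gap_arc s i g).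
Proof.
move=> Hgq Hq; case: (seq_split3 Hgq Hq) => u [w [v [-> <- <-]]].
rewrite catA seq_ins_cat -!catA !gap_arc_cat (catA u w v) gap_arc_cat !rev_cat.
by have := arc_renamed_ins (rev u ++ rev v) (rev w) X i; rewrite -!catA.
Qed.

Lemma gap_arc_ins_right s q X g i : q <= g -> g <= size s ->
  arc_renamed X (gap_arc s i q) (gap_arc (seq_ins s q X) i (g + size X)) (gap_arc s i g).
Proof.
move=> Hqg Hg; case: (seq_split3 Hqg Hg) => u [w [v [-> <- <-]]].
rewrite seq_ins_cat gap_arc_cat.
have -> : size (u ++ w) + size X = size (u ++ X ++ w) by rewrite !size_cat; lia.
have -> : u ++ X ++ w ++ v = (u ++ X ++ w) ++ v by rewrite -!catA.
rewrite (catA u w v) !gap_arc_cat !rev_cat.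
by have := arc_renamed_ins (rev w) (rev u ++ rev v) X i; rewrite -!catA.
Qed.

Lemma gap_arc_ins_at s q X i : q <= size s ->
  gap_arc (seq_ins s q X) i q = gap_arc s i q \/
  exists c, [/\ first_under (rev X) = Some c, gap_arc (seq_ins s q X) i q = inl c
              & gap_arc s i q = inr i].
Proof.
move=> Hq; have [u [v [-> <-]]] : exists u v, s = u ++ v /\ size u = q.
  by exists (take q s), (drop q s); rewrite cat_take_drop size_takel.
rewrite seq_ins_cat !gap_arc_cat rev_cat catA first_under_cat.
case: (first_under (rev u ++ rev v)) => [c|]; first by left.
by case: (first_under (rev X)) => [c|]; [right; exists c | left].
Qed.

Definition shift_pos (q : nat) (X : seq event) (j : nat) : nat :=
  if j < q then j else j + size X.

Lemma seq_ins_old s q X j i : q <= size s -> j < size s ->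
  [/\ shift_pos q X j < size (seq_ins s q X),
      ev (seq_ins s q X) (shift_pos q X j) = ev s j,
      arc_renamed X (gap_arc s i q) (gap_arc (seq_ins s q X) i (shift_pos q X j))
        (gap_arc s i j) &
      arc_renamed X (gap_arc s i q) (gap_arc (seq_ins s q X) i (shift_pos q X j).+1)
        (gap_arc s i j.+1)].
Proof.
move=> Hq Hj; rewrite /shift_pos size_seq_ins // nth_seq_ins //.
case: ifP => Hjq.
  by rewrite Hjq; split; [lia | by [] | apply: gap_arc_ins_left; lia ..].
rewrite !ifF; try lia; split; [lia | congr nth; lia | | rewrite -addSn];
  by apply: gap_arc_ins_right; lia.
Qed.

Lemma seq_ins_new s q X k d : q <= size s -> k < size X ->
  q + k < size (seq_ins s q X) /\ nth d (seq_ins s q X) (q + k) = nth d X k.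
Proof.
move=> Hq Hk; rewrite size_seq_ins // nth_seq_ins // ifF; last lia.
by rewrite ifT; [split; [lia | congr nth; lia] | lia].
Qed.

Lemma seq_ins_cover s q X J : q <= size s -> J < size (seq_ins s q X) ->
  (exists2 j, j < size s & J = shift_pos q X j) \/ (exists2 k, k < size X & J = q + k).
Proof.
move=> Hq; rewrite size_seq_ins // /shift_pos => HJ.
case: (ltnP J q) => H1; first by left; exists J; rewrite ?H1 //; lia.
case: (ltnP J (q + size X)) => H2; first by right; exists (J - q); lia.
by left; exists (J - size X); [lia | rewrite ifF; lia].
Qed.

Lemma nth_ins D i0 q X i : i0 < size D ->
  comp (ins D i0 q X) i = if i == i0 then seq_ins (comp D i0) q X else comp D i.
Proof. by move=> Hi; rewrite /ins nth_set_nth. Qed.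

Lemma size_ins D i0 q X : i0 < size D -> size (ins D i0 q X) = size D.
Proof. by move=> Hi; rewrite /ins size_set_nth; lia. Qed.

Definition comp_shift_pos (i0 q : nat) (X : seq event) (i j : nat) : nat :=
  if i == i0 then shift_pos q X j else j.

Lemma ins_old D i0 q X i j : i0 < size D -> q <= size (comp D i0) ->
  j < size (comp D i) ->
  let D1 := ins D i0 q X in let J := comp_shift_pos i0 q X i j in
  let a := gap_arc (comp D i0) i0 q in
  [/\ J < size (comp D1 i), ev (comp D1 i) J = ev (comp D i) j,
      arc_renamed X a (gap_arc (comp D1 i) i J) (gap_arc (comp D i) i j) &
      arc_renamed X a (gap_arc (comp D1 i) i J.+1) (gap_arc (comp D i) i j.+1)].
Proof.
move=> Hi0 Hq Hj /=; rewrite nth_ins // /comp_shift_pos.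
by case: eqVneq Hj => [-> Hj|_ Hj]; [exact: seq_ins_old | split; try left].
Qed.

Lemma ins_new D i0 q X k d : i0 < size D -> q <= size (comp D i0) -> k < size X ->
  q + k < size (comp (ins D i0 q X) i0) /\ nth d (comp (ins D i0 q X) i0) (q + k) = nth d X k.
Proof. by move=> Hi0 Hq Hk; rewrite nth_ins // eqxx; exact: seq_ins_new. Qed.

Lemma ins_cover D i0 q X i J : i0 < size D -> q <= size (comp D i0) ->
  J < size (comp (ins D i0 q X) i) ->
  (exists2 j, j < size (comp D i) & J = comp_shift_pos i0 q X i j) \/
  (i = i0 /\ exists2 k, k < size X & J = q + k).
Proof.
move=> Hi0 Hq; rewrite nth_ins // /comp_shift_pos; case: eqVneq => [->|_] HJ.
  case: (seq_ins_cover Hq HJ) => [[j Hj ->]|[k Hk ->]]; first by left; exists j.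
  by right; split => //; exists k.
by left; exists J.
Qed.

Lemma ins_comm D i1 p1 X i2 p2 Y : i1 < size D -> i2 < size D ->
  (i1 != i2) || (p2 <= p1) -> p1 <= size (comp D i1) ->
  ins (ins D i1 p1 X) i2 p2 Y =
  ins (ins D i2 p2 Y) i1 (if i1 == i2 then p1 + size Y else p1) X.
Proof.
move=> H1 H2 Hc Hp1; apply: (@eq_from_nth _ [::]); first by rewrite !size_ins.
move=> i _; rewrite !nth_ins ?size_ins //.
case: (eqVneq i1 i2) Hc => [<-|Hne] /= Hc.
  by case: eqVneq => // _; exact: seq_ins_comm.
case: (eqVneq i i2) => [->|_]; case: (eqVneq i i1) => [Hi1|_] //.
all: by rewrite eq_sym (negbTE Hne).
Qed.

Section VnInsertion.
Variables (D : gcode) (cs : seq nat) (ra rb : bool) (i1 i2 p2 q : nat).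

Definition labels : seq nat := if ra then rev cs else cs.
Definition under_blk : seq event :=
  if ra then rev [seq (c, false) | c <- cs] else [seq (c, false) | c <- cs].
Definition over_blk : seq event :=
  if rb then rev [seq (c, true) | c <- cs] else [seq (c, true) | c <- cs].
Definition DB : gcode := ins D i2 p2 over_blk.
Definition DAB : gcode := ins DB i1 q under_blk.

Local Notation n := (size cs).

Hypotheses (n_gt0 : 0 < n) (n_even : ~~ odd n) (cs_uniq : uniq cs)
  (cs_fresh : forall c b, c \in cs -> (c, b) \notin flatten D)
  (i1_lt : i1 < size D) (i2_lt : i2 < size D) (p2_le : p2 <= size (comp D i2))
  (q_le : q <= size (comp DB i1))
  (blocks_apart : [|| i1 != i2, q <= p2 | p2 + n <= q]).

(* In [DAB] the strand [a] (arc [alpha] of [D]) is cut into the arcs [xarc 0], ...,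
   [xarc n], which pass in turn under the single arc [yarc] of the strand [b]
   (arc [beta] of [D]); the last one, [xarc n], continues [a] beyond the tangle. *)
Definition alpha : gen := gap_arc (comp DB i1) i1 q.
Definition beta : gen := gap_arc (comp D i2) i2 p2.
Definition last_label : nat := nth 0 labels n.-1.
Definition xhead : gen := gap_arc (comp DAB i1) i1 q.
Definition xarc (m : nat) : gen := if m is m'.+1 then inl (nth 0 labels m') else xhead.
Definition pB : nat := comp_shift_pos i1 q under_blk i2 p2.
Definition yarc : gen := gap_arc (comp DAB i2) i2 pB.

Lemma under_blkE : under_blk = [seq (c, false) | c <- labels].
Proof. by rewrite /under_blk /labels; case: ra; rewrite ?map_rev. Qed.

Lemma size_labels : size labels = n.
Proof. by rewrite /labels; case: ra; rewrite ?size_rev. Qed.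

Lemma size_under_blk : size under_blk = n.
Proof. by rewrite under_blkE size_map size_labels. Qed.

Lemma size_over_blk : size over_blk = n.
Proof. by rewrite /over_blk; case: rb; rewrite ?size_rev size_map. Qed.

Lemma uniq_labels : uniq labels.
Proof. by rewrite /labels; case: ra; rewrite ?rev_uniq. Qed.

Lemma mem_labels c : (c \in labels) = (c \in cs).
Proof. by rewrite /labels; case: ra; rewrite ?mem_rev. Qed.

Lemma nth_under_blk m : m < n -> ev under_blk m = (nth 0 labels m, false).
Proof. by move=> Hm; rewrite under_blkE (nth_map 0) // size_labels. Qed.

Lemma all_over_over_blk : all_over over_blk.
Proof. by rewrite /over_blk; case: rb; rewrite ?all_rev all_map; apply/allP. Qed.

Lemma nth_over_blk_over k : (ev over_blk k).2.
Proof.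
case: (ltnP k (size over_blk)) => Hk; last by rewrite nth_default.
exact: (all_nthP (0, true) all_over_over_blk).
Qed.

Lemma mem_over_blk c : ((c, true) \in over_blk) = (c \in cs).
Proof.
rewrite /over_blk; case: rb; rewrite ?mem_rev; apply/mapP/idP => [[c' ? [->]] //|].
all: by exists c.
Qed.

Lemma first_under_under_blk : first_under (rev under_blk) = Some last_label.
Proof.
rewrite under_blkE -map_rev /last_label -size_labels nth_last.
have : 0 < size labels by rewrite size_labels.
by case/lastP: labels => [|l c] //= _; rewrite rev_rcons last_rcons /= first_under_cons.
Qed.

Lemma size_DB : size DB = size D.
Proof. exact: size_ins. Qed.

Lemma size_DAB : size DAB = size D.
Proof. by rewrite /DAB size_ins size_DB. Qed.

Lemma i1_lt_DB : i1 < size DB.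
Proof. by rewrite size_DB. Qed.

Lemma compDB i :
  comp DB i = if i == i2 then seq_ins (comp D i2) p2 over_blk else comp D i.
Proof. exact: nth_ins. Qed.

Lemma compDAB i :
  comp DAB i = if i == i1 then seq_ins (comp DB i1) q under_blk else comp DB i.
Proof. exact: nth_ins i1_lt_DB. Qed.

Lemma under_run m : m < n ->
  [/\ q + m < size (comp DAB i1), ev (comp DAB i1) (q + m) = (nth 0 labels m, false),
      gap_arc (comp DAB i1) i1 (q + m) = xarc m &
      gap_arc (comp DAB i1) i1 (q + m).+1 = inl (nth 0 labels m)].
Proof.
have run k : k < n -> q + k < size (comp DAB i1) /\
    ev (comp DAB i1) (q + k) = (nth 0 labels k, false).
  move=> Hk; rewrite -nth_under_blk //.
  by apply: ins_new; rewrite ?size_DB ?size_under_blk.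
move=> Hm; have [H1 H2] := run m Hm; split => //; last by rewrite gap_arc_step // H2.
case: m Hm H1 H2 => [|m] Hm H1 H2; first by rewrite addn0.
by rewrite addnS gap_arc_step; [have [_ ->] := run m (ltnW Hm) | lia].
Qed.

Lemma alpha_in_D : exists g, alpha = gap_arc (comp D i1) i1 g.
Proof.
rewrite /alpha compDB; case: (eqVneq i1 i2) => [E|_]; last by exists q.
subst i1; move: blocks_apart q_le; rewrite eqxx compDB eqxx size_seq_ins // size_over_blk.
move=> /= /orP [Hc|Hc] Hq.
  exists q; apply: (arc_renamed_all_over all_over_over_blk).
  exact: gap_arc_ins_left.
have Hp : p2 <= q - n by lia.
have Hs : q - n <= size (comp D i2) by lia.
exists (q - n); apply: (arc_renamed_all_over all_over_over_blk).
have := gap_arc_ins_right over_blk i2 Hp Hs.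
by rewrite size_over_blk subnK; [exact: id | lia].
Qed.

Lemma is_arc_notin_cs c : is_arc D (inl c) -> c \notin cs.
Proof. by move=> /= H; apply/negP => /(cs_fresh false); rewrite H. Qed.

Lemma is_arc_alpha : is_arc D alpha.
Proof. by case: alpha_in_D => g ->; exact: is_arc_gap_arc. Qed.

Lemma is_arc_beta : is_arc D beta.
Proof. exact: is_arc_gap_arc. Qed.

Lemma old_event i j : i < size D -> j < size (comp D i) ->
  let J := comp_shift_pos i1 q under_blk i (comp_shift_pos i2 p2 over_blk i j) in
  [/\ J < size (comp DAB i), ev (comp DAB i) J = ev (comp D i) j,
      arc_renamed under_blk alpha (gap_arc (comp DAB i) i J) (gap_arc (comp D i) i j) &
      arc_renamed under_blk alpha (gap_arc (comp DAB i) i J.+1) (gap_arc (comp D i) i j.+1)].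
Proof.
move=> Hi Hj /=.
have [a1 a2 a3 a4] := ins_old over_blk i2_lt p2_le Hj.
have [b1 b2 b3 b4] := ins_old under_blk i1_lt_DB q_le a1.
rewrite (arc_renamed_all_over all_over_over_blk a3) in b3.
rewrite (arc_renamed_all_over all_over_over_blk a4) in b4.
by split => //; rewrite -a2.
Qed.

Lemma pB_shift k : k < n -> comp_shift_pos i1 q under_blk i2 (p2 + k) = pB + k.
Proof.
move=> Hk; rewrite /pB /comp_shift_pos /shift_pos size_under_blk.
case: (eqVneq i2 i1) => [E|//]; move: blocks_apart; rewrite E eqxx /=.
by case: ifP; case: ifP; lia.
Qed.

Lemma over_run k : k < n ->
  [/\ pB + k < size (comp DAB i2), ev (comp DAB i2) (pB + k) = ev over_blk k &
      gap_arc (comp DAB i2) i2 (pB + k).+1 = yarc].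
Proof.
have run k' : k' < n -> pB + k' < size (comp DAB i2) /\
    ev (comp DAB i2) (pB + k') = ev over_blk k'.
  move=> Hk'; have Hk'B : k' < size over_blk by rewrite size_over_blk.
  have [h1 h2] := ins_new (0, true) i2_lt p2_le Hk'B.
  have [b1 b2 _ _] := ins_old under_blk i1_lt_DB q_le h1.
  by rewrite -/DB -/DAB pB_shift // in b1 b2; rewrite b2 h2.
move=> Hk; have [r1 r2] := run k Hk; split => //.
have Hsz : pB + n <= size (comp DAB i2) by have [+ _] := run n.-1 (ltac:(lia)); lia.
have Hover k' : k' < n -> (ev (comp DAB i2) (pB + k')).2.
  by move=> Hk'; have [_ ->] := run k' Hk'; exact: nth_over_blk_over.
by rewrite -addnS (gap_arc_over_run i2 Hsz Hover Hk).
Qed.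

Lemma event_cases i J : i < size D -> J < size (comp DAB i) ->
  (exists j, [/\ j < size (comp D i), ev (comp DAB i) J = ev (comp D i) j,
      arc_renamed under_blk alpha (gap_arc (comp DAB i) i J) (gap_arc (comp D i) i j) &
      arc_renamed under_blk alpha (gap_arc (comp DAB i) i J.+1) (gap_arc (comp D i) i j.+1)])
  \/ (i = i1 /\ exists2 m, m < n & J = q + m)
  \/ (i = i2 /\ exists2 k, k < n & J = pB + k).
Proof.
move=> Hi HJ; case: (ins_cover i1_lt_DB q_le HJ) => [[J1 HJ1 EJ]|[Ei [m Hm EJ]]].
  case: (ins_cover i2_lt p2_le HJ1) => [[j Hj EJ1]|[Ei [k Hk EJ1]]].
    by left; exists j; have := old_event Hi Hj; rewrite /= -EJ1 -EJ; case.
  right; right; split => //; exists k; first by rewrite -size_over_blk.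
  by rewrite EJ EJ1 Ei pB_shift // -size_over_blk.
by right; left; split => //; exists m; rewrite // -size_under_blk.
Qed.

Lemma yarc_renamed : arc_renamed under_blk alpha yarc beta.
Proof.
have Hp2 : p2 < size (comp DB i2) by rewrite compDB eqxx size_seq_ins // size_over_blk; lia.
have [_ _ _ b4] := ins_old under_blk i1_lt_DB q_le Hp2.
have [_ _ Hy] := over_run n_gt0; rewrite addn0 in Hy.
rewrite /comp_shift_pos -/(comp_shift_pos i1 q under_blk i2 p2) -/pB -/DAB Hy in b4.
have n_gt0' : 0 < size over_blk by rewrite size_over_blk.
have [_ h2] := ins_new (0, true) i2_lt p2_le n_gt0'; rewrite -/DB addn0 in h2.
rewrite gap_arc_step // h2 nth_over_blk_over in b4.
move: b4; rewrite /beta (compDB i2) eqxx.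
have := gap_arc_ins_left over_blk i2 (leqnn p2) p2_le.
by move=> /(arc_renamed_all_over all_over_over_blk) ->.
Qed.

Lemma gap_arc_DAB_neq_i1 i g : i < size D -> gap_arc (comp DAB i) i g <> inr i1.
Proof.
move=> Hi /gap_arc_inr [Ei Hall]; subst i.
have [h1 h2 _ _] := under_run n_gt0.
by have := all_nthP (0, true) Hall _ h1; rewrite h2.
Qed.

Lemma xhead_cases : xhead = alpha \/ (xhead = inl last_label /\ alpha = inr i1).
Proof.
rewrite /xhead compDAB eqxx /alpha.
case: (gap_arc_ins_at under_blk i1 q_le) => [->|[c [Hc -> ->]]]; first by left.
by right; move: Hc; rewrite first_under_under_blk => -[->].
Qed.

Local Notation R := (is_relator D).
Local Notation R' := (is_relator DAB).

Definition ab_iter (m : nat) : word := core_iter (word1 beta) (word1 alpha) m.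

Definition psi_gen (g : gen) : word :=
  if g is inl c then
    if c \in labels then ab_iter (index c labels).+1 else word1 g
  else word1 g.

Definition phi_gen (g : gen) : word := word1 (if g == alpha then xhead else g).

Lemma psi_old g : is_arc D g -> psi_gen g = word1 g.
Proof.
case: g => [c|i] Hg //=; rewrite mem_labels.
by have /negbTE -> := is_arc_notin_cs Hg.
Qed.

Lemma psi_label m : m < n -> psi_gen (inl (nth 0 labels m)) = ab_iter m.+1.
Proof.
by move=> Hm; rewrite /= mem_nth ?size_labels // index_uniq ?size_labels ?uniq_labels.
Qed.

Lemma psi_last_label : psi_gen (inl last_label) = word1 alpha.
Proof.
rewrite /last_label psi_label; last lia.
by rewrite prednK // /ab_iter /core_iter (negbTE n_even).
Qed.

Lemma psi_renamed l' l :
  is_arc D l -> arc_renamed under_blk alpha l' l -> psi_gen l' = word1 l.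
Proof.
move=> Hl [->|[c [Hc [-> ->]]]]; first exact: psi_old.
by move: Hc; rewrite first_under_under_blk => -[<-]; exact: psi_last_label.
Qed.

Lemma psi_xhead : psi_gen xhead = word1 alpha.
Proof.
by case: xhead_cases => [->|[-> _]]; [exact: psi_old is_arc_alpha | exact: psi_last_label].
Qed.

Lemma psi_xarc m : m <= n -> psi_gen (xarc m) = ab_iter m.
Proof. by case: m => [_|m Hm]; [exact: psi_xhead | exact: psi_label]. Qed.

Lemma relator_xarc m : m < n -> R' (crossing_word yarc (xarc m) (xarc m.+1)).
Proof.
move=> Hm; have [a1 a2 a3 a4] := under_run Hm.
have /(nth_index (0, true)) HB : (nth 0 labels m, true) \in over_blk.
  by rewrite mem_over_blk -mem_labels mem_nth ?size_labels.
have Hk : index (nth 0 labels m, true) over_blk < n.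
  by rewrite -size_over_blk index_mem mem_over_blk -mem_labels mem_nth ?size_labels.
have [b1 b2 b3] := over_run Hk.
apply/is_relatorP; exists i1, (q + m), i2, (pB + index (nth 0 labels m, true) over_blk).
exists (nth 0 labels m); split; last by rewrite /crossing_relator b3 a3.
by split; rewrite ?size_DAB // b2 HB.
Qed.

Lemma xarc_iter m : m <= n ->
  wequiv R' (word1 (xarc m)) (core_iter (word1 yarc) (word1 xhead) m).
Proof.
elim: m => [|m IH] Hm; first exact: we_refl.
apply: we_trans (core_iterS _ _ _ m).
have /wequiv_relator := relator_xarc Hm; rewrite crossing_wordE => /wequiv_mulV_eq Hx.
apply: we_trans (we_sym Hx) _; apply: wequiv_core; [exact: we_refl | apply: IH; lia].
Qed.

Lemma last_label_xhead : wequiv R' (word1 (inl last_label)) (word1 xhead).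
Proof.
have := xarc_iter (leqnn n); rewrite /core_iter (negbTE n_even).
by rewrite /last_label; case: (size cs) n_gt0.
Qed.

Lemma phi_renamed l l' : arc_renamed under_blk alpha l' l -> l' <> inr i1 ->
  wequiv R' (phi_gen l) (word1 l').
Proof.
rewrite /phi_gen => -[->|[c [Hc [-> ->]]]] Hne.
  case: eqP => [E|_]; last exact: we_refl.
  case: xhead_cases => [->|[_ Ea]]; first by rewrite E; exact: we_refl.
  by move: Hne; rewrite E Ea.
move: Hc; rewrite first_under_under_blk eqxx => -[<-].
exact: we_sym last_label_xhead.
Qed.

Lemma is_arc_DAB_old g : is_arc D g -> g != alpha -> is_arc DAB g.
Proof.
case: g => [c|i] /= Hg Ne.
  have [i [j [Hi Hj <-]]] := mem_flatten_nth Hg.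
  have [a1 a2 _ _] := old_event Hi Hj.
  by rewrite -a2; apply: nth_mem_flatten; rewrite ?size_DAB.
case/andP: Hg => Hi Hall; rewrite size_DAB Hi; apply/(all_nthP (0, true)) => J HJ.
case: (event_cases Hi HJ) => [[j [j1 -> _ _]]|[[Ei _]|[Ei [k Hk ->]]]].
- exact: (all_nthP (0, true) Hall).
- case/eqP: Ne; subst i; case: alpha_in_D => g ->.
  by rewrite gap_arc_all_over.
- by subst i; have [_ -> _] := over_run Hk; exact: nth_over_blk_over.
Qed.

Lemma phi_over g : is_arc D g -> over_gens (is_arc DAB) (phi_gen g).
Proof.
move=> Hg; rewrite /phi_gen /over_gens /= andbT.
case: eqP => [_|/eqP Ne]; last exact: is_arc_DAB_old.
by apply: is_arc_gap_arc; rewrite size_DAB.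
Qed.

Lemma psi_over g : is_arc DAB g -> over_gens (is_arc D) (psi_gen g).
Proof.
have ab_over m : over_gens (is_arc D) (ab_iter m).
  by rewrite /ab_iter /core_iter /over_gens; case: odd; rewrite /= ?is_arc_alpha ?is_arc_beta.
case: g => [c|i] Hg /=.
  case: ifP => HcL; first exact: ab_over.
  rewrite /over_gens /= andbT; have [i [J [Hi HJ Hn]]] := mem_flatten_nth Hg.
  rewrite size_DAB in Hi.
  case: (event_cases Hi HJ) => [[j [j1 j2 _ _]]|[[Ei [m Hm EJ]]|[Ei [k Hk EJ]]]].
  - by rewrite -Hn j2; exact: nth_mem_flatten.
  - subst i J; have [_ h2 _ _] := under_run Hm; move: Hn; rewrite h2 => -[Ec].
    by rewrite -Ec mem_nth ?size_labels in HcL.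
  - by subst i J; have [_ h2 _] := over_run Hk; move: (nth_over_blk_over k); rewrite -h2 Hn.
rewrite /over_gens /= andbT; case/andP: Hg; rewrite size_DAB => Hi Hall.
rewrite Hi; apply/(all_nthP (0, true)) => j Hj.
have [a1 a2 _ _] := old_event Hi Hj.
by rewrite -a2; exact: (all_nthP (0, true) Hall _ a1).
Qed.

Lemma phi_relator r : R r -> wequiv R' (word_subst phi_gen r) [::].
Proof.
case/is_relatorP => i [j [i' [j' [c [[Hi Hj Hn [Hi' Hj'] Hn'] ->]]]]].
have [a1 a2 a3 a4] := old_event Hi Hj; have [b1 b2 b3 b4] := old_event Hi' Hj'.
set J := comp_shift_pos _ _ _ i _ in a1 a2 a3 a4.
set J' := comp_shift_pos _ _ _ i' _ in b1 b2 b3 b4.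
have HR' : R' (crossing_relator DAB i J i' J' c).
  apply/is_relatorP; do 5 eexists; split; last reflexivity.
  by split; rewrite ?size_DAB ?a2 ?b2.
apply: we_trans (wequiv_relator HR').
by apply: wequiv_subst_crossing_word; apply: phi_renamed;
  rewrite /arc_renamed; auto using gap_arc_DAB_neq_i1.
Qed.

Lemma psi_relator_under m : m < n ->
  wequiv R (word_subst psi_gen (crossing_word yarc (xarc m) (xarc m.+1))) [::].
Proof.
move=> Hm; rewrite word_subst_crossing_word (psi_renamed is_arc_beta yarc_renamed).
have Hm' := ltnW Hm; rewrite !psi_xarc //; exact: wequiv_mulV_of_eq (core_iterS _ _ _ _).
Qed.

Lemma psi_relator r : R' r -> wequiv R (word_subst psi_gen r) [::].
Proof.
case/is_relatorP => i [J [i' [J' [c [[Hi HJ Hn [Hi' HJ'] Hn'] ->]]]]].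
rewrite size_DAB in Hi Hi'.
case: (event_cases Hi HJ) => [[j [j1 j2 j3 j4]]|[[Ei [m Hm EJ]]|[Ei [k Hk EJ]]]].
- have Hc : c \notin cs.
    by apply: is_arc_notin_cs; rewrite /= -Hn j2 nth_mem_flatten.
  case: (event_cases Hi' HJ') => [[j' [k1 k2 k3 k4]]|[[Ei' [m Hm EJ']]|[Ei' [k Hk EJ']]]].
  + have HR : R (crossing_relator D i j i' j' c).
      apply/is_relatorP; do 5 eexists; split; last reflexivity.
      by split; rewrite -?j2 -?k2.
    apply: we_trans (wequiv_relator HR); apply: wequiv_subst_crossing_word.
    * by rewrite (psi_renamed _ k4) ?is_arc_gap_arc //; exact: we_refl.
    * by rewrite (psi_renamed _ j3) ?is_arc_gap_arc //; exact: we_refl.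
    * by rewrite psi_old; [exact: we_refl | rewrite /= -Hn j2 nth_mem_flatten].
  + by subst; have [_ h2 _ _] := under_run Hm; rewrite h2 in Hn'.
  + subst; have [_ h2 _] := over_run Hk; rewrite h2 in Hn'.
    by rewrite -mem_over_blk -Hn' mem_nth ?size_over_blk in Hc.
- subst; have [a1 a2 a3 a4] := under_run Hm; rewrite a2 in Hn; case: Hn => Ec.
  case: (event_cases Hi' HJ') => [[j' [k1 k2 k3 k4]]|[[Ei' [m' Hm' EJ']]|[Ei' [k Hk EJ']]]].
  + have : (c, true) \in flatten D by rewrite -Hn' k2 nth_mem_flatten.
    by rewrite (negbTE (cs_fresh _ _)) // -Ec -mem_labels mem_nth ?size_labels.
  + by subst; have [_ h2 _ _] := under_run Hm'; rewrite h2 in Hn'.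
  + subst; have [_ _ b3] := over_run Hk.
    by rewrite /crossing_relator b3 a3; exact: psi_relator_under.
- by subst; have [_ h2 _] := over_run Hk; move: (nth_over_blk_over k); rewrite -h2 Hn.
Qed.

Lemma psi_phi g : is_arc D g -> wequiv R (word_subst psi_gen (phi_gen g)) (word1 g).
Proof.
move=> Hg; rewrite word_subst1 /phi_gen; case: eqP => [->|_].
  by rewrite psi_xhead; exact: we_refl.
by rewrite psi_old //; exact: we_refl.
Qed.

Lemma phi_gen_arc g : is_arc DAB g -> wequiv R' (phi_gen g) (word1 g).
Proof.
rewrite /phi_gen; case: eqP => [E|_] Hg; last exact: we_refl.
case: xhead_cases => [->|[_ Ea]]; first by rewrite E; exact: we_refl.
move: Hg; rewrite E Ea => /andP [_ /(all_nthP (0, true)) Hall].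
by have [h1 h2 _ _] := under_run n_gt0; have := Hall _ h1; rewrite h2.
Qed.

Lemma phi_psi g : is_arc DAB g -> wequiv R' (word_subst phi_gen (psi_gen g)) (word1 g).
Proof.
case: g => [c|i] Hg; last by rewrite /= word_subst1; exact: phi_gen_arc.
rewrite /=; case: ifP => HcL; last by rewrite word_subst1; exact: phi_gen_arc.
have Hm : index c labels < n by rewrite -size_labels index_mem.
have := xarc_iter Hm; rewrite /= nth_index // => Hc; apply: we_trans (we_sym Hc).
rewrite /ab_iter word_subst_core_iter !word_subst1; apply: wequiv_core_iter.
- by apply: phi_renamed yarc_renamed _; exact: gap_arc_DAB_neq_i1.
- by rewrite /phi_gen; case: eqP => // _; exact: we_refl.
Qed.

Lemma vn_pres_iso : pres_iso (is_arc D) R (is_arc DAB) R'.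
Proof.
apply: (@pres_iso_subst _ _ _ _ phi_gen psi_gen).
- exact: phi_over.
- exact: psi_over.
- exact: phi_relator.
- exact: psi_relator.
- exact: psi_phi.
- exact: phi_psi.
Qed.

End VnInsertion.

Lemma size_DB_comp D cs rb i1 i2 p2 : i2 < size D -> p2 <= size (comp D i2) ->
  size (comp (DB D cs rb i2 p2) i1) = size (comp D i1) + (if i1 == i2 then size cs else 0).
Proof.
move=> Hi2 Hp2; rewrite /DB nth_ins //.
by case: eqVneq => [->|_]; rewrite ?size_seq_ins ?size_over_blk ?addn0.
Qed.

Lemma vn_insert_pres_iso n D D' : 0 < n -> ~~ odd n -> vn_insert n D D' ->
  pres_iso (is_arc D) (is_relator D) (is_arc D') (is_relator D').
Proof.
move=> n_gt0 n_even [cs [ra [rb [i1 [p1 [i2 [p2 [[Hn cs_uniq] cs_fresh [i1_lt p1_le]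
  [i2_lt p2_le] HD']]]]]]]]; subst n.
change (D' = ins2 D i1 p1 (under_blk cs ra) i2 p2 (over_blk cs rb) \/
        D' = ins2 D i2 p2 (over_blk cs rb) i1 p1 (under_blk cs ra)) in HD'.
have iso q : q <= size (comp D i1) + (if i1 == i2 then size cs else 0) ->
    [|| i1 != i2, q <= p2 | p2 + size cs <= q] ->
    pres_iso (is_arc D) (is_relator D)
      (is_arc (DAB D cs ra rb i1 i2 p2 q)) (is_relator (DAB D cs ra rb i1 i2 p2 q)).
  by rewrite -(@size_DB_comp D cs rb i1 i2 p2) // => *; exact: vn_pres_iso.
have swap : (i1 != i2) || (p2 <= p1) ->
    ins (ins D i1 p1 (under_blk cs ra)) i2 p2 (over_blk cs rb) =
    DAB D cs ra rb i1 i2 p2 (if i1 == i2 then p1 + size cs else p1).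
  by move=> Hc; rewrite ins_comm // size_over_blk.
case: (eqVneq i1 i2) => [E|Ne].
  subst i2; case: HD' => ->; rewrite /ins2 eqxx andTb; case: ltnP => H.
  - by rewrite swap ?eqxx; [refine (iso _ _ _); rewrite eqxx /=; lia | apply/orP; right; lia].
  - by refine (iso p1 _ _); rewrite eqxx /=; lia.
  - by refine (iso p1 _ _); rewrite eqxx /=; lia.
  - by rewrite swap ?eqxx ?H ?orbT //; refine (iso _ _ _); rewrite eqxx /=; lia.
have NE : (i1 == i2) = false := negbTE Ne.
have NE' : (i2 == i1) = false by rewrite eq_sym.
case: HD' => ->; rewrite /ins2 ?NE ?NE' !andFb; last rewrite swap ?Ne // NE.
all: by refine (iso p1 _ _); rewrite ?NE ?Ne // addn0.
Qed.

Theorem proposition6p2 (n : nat) (D D' : gcode) :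
  0 < n -> ~~ odd n -> wf_gcode D -> wf_gcode D' -> vn_move n D D' ->
  pres_iso (is_arc D) (is_relator D) (is_arc D') (is_relator D').
Proof.
(* The freshness of the new labels is all that is used; well-formedness is not. *)
move=> n_gt0 n_even _ _ [HD'|HD']; first exact: vn_insert_pres_iso HD'.
by apply: pres_iso_sym; exact: vn_insert_pres_iso HD'.
Qed.
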